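(* Let $G$ be a SIN topological group, $\xi=(E\xrightarrow{p}X)$ a numerable principal $G$-bundle, $C$ an $X$-groupoid, $\mathcal G$ the gauge group of $\xi$ and $\mathcal R(C,\xi)$ the set of representations of $C$ on $\xi$. Then the right action $\mathcal R(C,\xi)\times\mathcal G\to\mathcal R(C,\xi)$, $(w,\chi)\mapsto w^\chi$, is uniformly continuous for the uniform structures $\mathbf U_{\mathcal R}$ on $\mathcal R(C,\xi)$ and $\mathbf U_{\mathcal G}$ on $\mathcal G$.
   Context: SIN: the identity has a fundamental system of conjugation-invariant neighbourhoods. $X$-groupoid: a space $C$ with continuous source/target $\alpha,\beta:C\to X$, continuous associative partial composition on $\{(c_1,c_2):\alpha(c_1)=\beta(c_2)\}$ with $\alpha(c_1c_2)=\alpha(c_2)$, $\beta(c_1c_2)=\beta(c_1)$, continuous units and continuous inversion exchanging source and target. A representation of $C$ on $\xi$ is a continuous $w:C\times_XE\to E$ (fiber product over $\alpha$, $p$) with $p(w(c,z))=\beta(c)$, $w(cd,z)=w(c,w(d,z))$, $w(c^{-1},w(c,z))=z$, $w(c,zg)=w(c,z)g$. Gauge group $\mathcal G$: $G$-equivariant homeomorphisms $\chi$ of $E$ with $p\chi=p$; action $w^\chi(c,z)=\chi^{-1}(w(c,\chi(z)))$. Let $\gamma:E\times_XE\to G$ be defined by $y=z\gamma(y,z)$ and $\mathcal V_G$ the set of open symmetric neighbourhoods of $e$ in $G$. $\mathbf U_{\mathcal G}$ has fundamental entourages $\{(\chi,\tilde\chi):\gamma(\chi(z),\tilde\chi(z))\in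 V\ \forall z\in p^{-1}(K)\}$ ($K\subset X$ compact, $V\in\mathcal V_G$). $\mathbf U_{\mathcal R}$ has fundamental entourages $\mathcal O^{\mathcal R}(L,V)=\{(w,\tilde w):\gamma(w(c,z),\tilde w(c,z))\in V\ \forall(c,z)\in L\times_XE\}$ ($L\subset C$ compact, $V\in\mathcal V_G$). The product carries the product uniform structure. *)

From HB Require Import structures.
From mathcomp Require Import all_boot all_order all_algebra.
From mathcomp Require Import all_classical all_reals all_analysis.
From mathcomp Require Import Rstruct Rstruct_topology.
Set Implicit Arguments. Unset Strict Implicit. Unset Printing Implicit Defensive.
Import Order.TTheory GRing.Theory Num.Theory.
Local Open Scope classical_set_scope.
Local Open Scope ring_scope.

Record TopGroup (G : topologicalType) := {
  tg_mul : G -> G -> G;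
  tg_inv : G -> G;
  tg_one : G;
  tg_mulA : forall x y z, tg_mul x (tg_mul y z) = tg_mul (tg_mul x y) z;
  tg_mul1 : forall x, tg_mul tg_one x = x;
  tg_mulV : forall x, tg_mul (tg_inv x) x = tg_one;
  tg_mul_cont : continuous (fun xy : G * G => tg_mul xy.1 xy.2);
  tg_inv_cont : continuous tg_inv }.

Definition SIN (G : topologicalType) (TG : TopGroup G) : Prop :=
  forall U : set G, nbhs (tg_one TG) U ->
    exists V : set G, [/\ nbhs (tg_one TG) V, V `<=` U &
      forall g x, V x -> V (tg_mul TG (tg_mul TG g x) (tg_inv TG g))].

Definition sym_open_nbhd (G : topologicalType) (TG : TopGroup G) (V : set G) :=
  [/\ open V, V (tg_one TG) & forall g, V g -> V (tg_inv TG g)].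

Record principal_bundle (G : topologicalType) (TG : TopGroup G)
    (E X : topologicalType) := {
  pb_p : E -> X;
  pb_act : E -> G -> E;
  pb_p_cont : continuous pb_p;
  pb_p_surj : forall x, exists z, pb_p z = x;
  pb_act_cont : continuous (fun zg : E * G => pb_act zg.1 zg.2);
  pb_act_one : forall z, pb_act z (tg_one TG) = z;
  pb_act_mul : forall z g h, pb_act (pb_act z g) h = pb_act z (tg_mul TG g h);
  pb_p_act : forall z g, pb_p (pb_act z g) = pb_p z;
  pb_free : forall z g h, pb_act z g = pb_act z h -> g = h;
  pb_gamma : E -> E -> G;
  pb_gammaP : forall y z, pb_p y = pb_p z -> y = pb_act z (pb_gamma y z);
  pb_gamma_cont : {within [set yz : E * E | pb_p yz.1 = pb_p yz.2],
                    continuous (fun yz => pb_gamma yz.1 yz.2)} }.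

Section Bundle.
Context (G : topologicalType) (TG : TopGroup G) (E X : topologicalType)
        (xi : principal_bundle TG E X).
Local Notation p := (pb_p xi).
Local Notation act := (pb_act xi).

Definition trivial_over (U : set X) : Prop :=
  exists (phi : X * G -> E) (psi : E -> X * G),
  [/\ {within U `*` setT, continuous phi} /\
      {within p @^-1` U, continuous psi},
      (forall x g, U x -> p (phi (x, g)) = x),
      (forall x g h, U x -> phi (x, tg_mul TG g h) = act (phi (x, g)) h),
      (forall x g, U x -> psi (phi (x, g)) = (x, g)) &
      (forall z, U (p z) -> phi (psi z) = z)].

Definition numerable_cover (I : Type) (U : I -> set X) : Prop :=
  (forall i, open (U i)) /\ (forall x, exists i, U i x) /\
  exists u : I -> X -> Rdefinitions.R,
  [/\ (forall i, continuous (u i)),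
      (forall i x, 0 <= u i x <= 1),
      (forall i, [set x | 0 < u i x] `<=` U i),
      (forall x : X, exists N, nbhs x N /\ exists F : seq I,
           forall i, (exists y, N y /\ u i y != 0) -> List.In i F) &
      (forall x, exists F : seq I, [/\ List.NoDup F,
           (forall i, u i x != 0 -> List.In i F) & \sum_(i <- F) u i x = 1])].

Definition numerable : Prop :=
  exists (I : Type) (U : I -> set X), numerable_cover U /\ forall i, trivial_over (U i).

Record gauge_elt := {
  ga_fun : E -> E;
  ga_inv : E -> E;
  ga_fun_cont : continuous ga_fun;
  ga_inv_cont : continuous ga_inv;
  ga_funK : forall z, ga_inv (ga_fun z) = z;
  ga_invK : forall z, ga_fun (ga_inv z) = z;
  ga_equiv : forall z g, ga_fun (act z g) = act (ga_fun z) g;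
  ga_p : forall z, p (ga_fun z) = p z }.

Definition ent_gauge (K : set X) (V : set G) (chi chi' : gauge_elt) : Prop :=
  forall z, K (p z) -> V (pb_gamma xi (ga_fun chi z) (ga_fun chi' z)).

End Bundle.

Record groupoid (X C : topologicalType) := {
  gd_src : C -> X;
  gd_tgt : C -> X;
  gd_comp : C -> C -> C;
  gd_unit : X -> C;
  gd_inv : C -> C;
  gd_src_cont : continuous gd_src;
  gd_tgt_cont : continuous gd_tgt;
  gd_comp_cont : {within [set cd : C * C | gd_src cd.1 = gd_tgt cd.2],
                   continuous (fun cd => gd_comp cd.1 cd.2)};
  gd_compA : forall c1 c2 c3, gd_src c1 = gd_tgt c2 -> gd_src c2 = gd_tgt c3 ->
     gd_comp c1 (gd_comp c2 c3) = gd_comp (gd_comp c1 c2) c3;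
  gd_src_comp : forall c1 c2, gd_src c1 = gd_tgt c2 ->
     gd_src (gd_comp c1 c2) = gd_src c2;
  gd_tgt_comp : forall c1 c2, gd_src c1 = gd_tgt c2 ->
     gd_tgt (gd_comp c1 c2) = gd_tgt c1;
  gd_unit_cont : continuous gd_unit;
  gd_src_unit : forall x, gd_src (gd_unit x) = x;
  gd_tgt_unit : forall x, gd_tgt (gd_unit x) = x;
  gd_unitl : forall c, gd_comp (gd_unit (gd_tgt c)) c = c;
  gd_unitr : forall c, gd_comp c (gd_unit (gd_src c)) = c;
  gd_inv_cont : continuous gd_inv;
  gd_src_inv : forall c, gd_src (gd_inv c) = gd_tgt c;
  gd_tgt_inv : forall c, gd_tgt (gd_inv c) = gd_src c;
  gd_invl : forall c, gd_comp (gd_inv c) c = gd_unit (gd_src c);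
  gd_invr : forall c, gd_comp c (gd_inv c) = gd_unit (gd_tgt c) }.

Section Reps.
Context (G : topologicalType) (TG : TopGroup G) (E X C : topologicalType)
        (xi : principal_bundle TG E X) (Cg : groupoid X C).
Local Notation p := (pb_p xi).
Local Notation act := (pb_act xi).
Local Notation alpha := (gd_src Cg).
Local Notation beta := (gd_tgt Cg).

(* w : C x_X E -> E, represented as a curried function; only its values on
   the fibre product {(c,z) | alpha c = p z} matter. *)
Definition is_rep (w : C -> E -> E) : Prop :=
  [/\ {within [set cz : C * E | alpha cz.1 = p cz.2],
        continuous (fun cz => w cz.1 cz.2)},
      (forall c z, alpha c = p z -> p (w c z) = beta c),
      (forall c d z, alpha c = beta d -> alpha d = p z ->
         w (gd_comp Cg c d) z = w c (w d z)),
      (forall c z, alpha c = p z -> w (gd_inv Cg c) (w c z) = z) &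
      (forall c z g, alpha c = p z -> w c (act z g) = act (w c z) g)].

Definition rep_gauge_act (w : C -> E -> E) (chi : gauge_elt xi) : C -> E -> E :=
  fun c z => ga_inv chi (w c (ga_fun chi z)).

Definition ent_rep (L : set C) (V : set G) (w w' : C -> E -> E) : Prop :=
  forall c z, L c -> alpha c = p z -> V (pb_gamma xi (w c z) (w' c z)).

End Reps.

(* With [u := chi' z] and [y := w'^chi' (c, z)], equivariance of [w] and of gauge
   transformations gives
     gamma (w^chi (c, z), y)
       = gamma (chi y, chi' y)^-1 * gamma (w (c, u), w' (c, u)) * gamma (chi z, chi' z),
   where [p z = alpha c] and [p y = beta c].  So if [w, w'] are [W]-close on [L] and
   [chi, chi'] are [W]-close over the compact set [alpha L ∪ beta L], the two actions are
   [W^3]-close on [L]; it remains to pick a symmetric [W] with [W^3 ⊆ V]. *)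
From mathcomp Require Import all_boot all_order all_algebra.
From mathcomp Require Import all_classical all_reals all_analysis.
Local Open Scope classical_set_scope.

Section TopGroupFacts.
Context {G : topologicalType} {TG : TopGroup G}.
Local Notation mul := (tg_mul TG).
Local Notation inv := (tg_inv TG).
Local Notation one := (tg_one TG).

Lemma tg_mulVr x : mul x (inv x) = one.
Proof.
rewrite -[mul x (inv x)](tg_mul1 TG) -[in X in mul X _](tg_mulV TG (inv x)).
by rewrite -(tg_mulA TG) (tg_mulA TG (inv x)) (tg_mulV TG) (tg_mul1 TG) (tg_mulV TG).
Qed.

Lemma tg_mulr1 x : mul x one = x.
Proof. by rewrite -(tg_mulV TG x) (tg_mulA TG) tg_mulVr (tg_mul1 TG). Qed.

Lemma tg_inv1 : inv one = one.
Proof. by rewrite -[inv one]tg_mulr1 (tg_mulV TG). Qed.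

Lemma tg_invK x : inv (inv x) = x.
Proof.
by rewrite -[inv (inv x)]tg_mulr1 -(tg_mulV TG x) (tg_mulA TG) (tg_mulV TG) (tg_mul1 TG).
Qed.

Lemma nbhs_one_mul {V : set G} : nbhs one V ->
  exists A B : set G, [/\ nbhs one A, nbhs one B & forall a b, A a -> B b -> V (mul a b)].
Proof.
move=> nV; have := @tg_mul_cont G TG (one, one) V.
rewrite /= (tg_mul1 TG) => /(_ nV) -[[A B] /= [nA nB] AB].
by exists A, B; split => // a b Aa Bb; apply: (AB (a, b)).
Qed.

Lemma nbhs_one_sym_open {U : set G} : nbhs one U ->
  exists W : set G, sym_open_nbhd TG W /\ W `<=` U.
Proof.
move=> nU; exists (U° `&` inv @^-1` U°); split; last by move=> g [/interior_subset].
split.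
- apply: openI; first exact: open_interior.
  by apply: open_comp; [move=> x _; exact: tg_inv_cont | exact: open_interior].
- by split; rewrite /= ?tg_inv1; apply: nbhs_singleton; apply: nbhs_interior.
- by move=> g [Ug Uig]; split; rewrite /= ?tg_invK.
Qed.

Lemma nbhs_one_mul3 {V : set G} : nbhs one V ->
  exists W : set G, sym_open_nbhd TG W /\
    forall a b c, W a -> W b -> W c -> V (mul a (mul b c)).
Proof.
move=> nV.
have [A1 [B1 [nA1 nB1 AB1]]] := nbhs_one_mul nV.
have [A2 [B2 [nA2 nB2 AB2]]] := nbhs_one_mul nB1.
have [W [sW WA]] := nbhs_one_sym_open (filterI nA1 (filterI nA2 nB2)).
exists W; split => // a b c /WA[Aa _] /WA[_ [Ab _]] /WA[_ [_ Bc]].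
by apply: AB1 => //; apply: AB2.
Qed.

End TopGroupFacts.

Section RepresentationFacts.
Context {G : topologicalType} {TG : TopGroup G} {E X C : topologicalType}
  {xi : principal_bundle TG E X} {Cg : groupoid X C}.
Local Notation mul := (tg_mul TG).
Local Notation inv := (tg_inv TG).
Local Notation p := (pb_p xi).
Local Notation act := (pb_act xi).
Local Notation gamma := (pb_gamma xi).
Local Notation alpha := (gd_src Cg).
Local Notation beta := (gd_tgt Cg).

Lemma pb_gamma_act y g : gamma (act y g) y = g.
Proof. by apply: (@pb_free _ _ _ _ xi y); rewrite -pb_gammaP // pb_p_act. Qed.

Lemma pb_act_gammaV y z : p y = p z -> z = act y (inv (gamma y z)).
Proof.
move=> /pb_gammaP; set g := gamma y z => ->.
by rewrite pb_act_mul tg_mulVr pb_act_one.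
Qed.

Lemma ga_inv_p (chi : gauge_elt xi) z : p (ga_inv chi z) = p z.
Proof. by rewrite -(ga_p chi) ga_invK. Qed.

Lemma compact_src_tgt_image (L : set C) :
  compact L -> compact (alpha @` L `|` beta @` L).
Proof.
move=> cL; apply: compactU; apply: continuous_compact => //.
- by apply: continuous_subspaceT => ?; exact: gd_src_cont.
- by apply: continuous_subspaceT => ?; exact: gd_tgt_cont.
Qed.

Lemma p_rep_gauge_act (w : C -> E -> E) (chi : gauge_elt xi) c z :
  is_rep xi Cg w -> alpha c = p z -> p (rep_gauge_act w chi c z) = beta c.
Proof. by case=> _ wp _ _ _ azp; rewrite ga_inv_p wp // ga_p. Qed.

Lemma pb_gamma_rep_gauge_act (w w' : C -> E -> E) (chi chi' : gauge_elt xi) c z :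
  is_rep xi Cg w -> is_rep xi Cg w' -> alpha c = p z ->
  gamma (rep_gauge_act w chi c z) (rep_gauge_act w' chi' c z) =
  mul (inv (gamma (ga_fun chi (rep_gauge_act w' chi' c z))
                  (ga_fun chi' (rep_gauge_act w' chi' c z))))
      (mul (gamma (w c (ga_fun chi' z)) (w' c (ga_fun chi' z)))
           (gamma (ga_fun chi z) (ga_fun chi' z))).
Proof.
move=> [_ wp _ _ wact] [_ w'p _ _ _] azp.
set u := ga_fun chi' z; set y := rep_gauge_act w' chi' c z.
set g := gamma (ga_fun chi z) u; set k := gamma (w c u) (w' c u).
set h := gamma (ga_fun chi y) (ga_fun chi' y).
have pu : p u = p z by rewrite ga_p.
have chiz : ga_fun chi z = act u g by apply: pb_gammaP; rewrite !ga_p.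
have wu : w c u = act (w' c u) k by apply: pb_gammaP; rewrite wp ?w'p // pu.
have w'u : w' c u = act (ga_fun chi y) (inv h).
  by rewrite -[w' c u](ga_invK chi'); apply: pb_act_gammaV; rewrite !ga_p.
rewrite /rep_gauge_act -/y chiz wact ?pu // wu w'u !pb_act_mul -ga_equiv ga_funK.
exact: pb_gamma_act.
Qed.

End RepresentationFacts.

Theorem proposition3p3
  (G : topologicalType) (TG : TopGroup G) (E X C : topologicalType)
  (xi : principal_bundle TG E X) (Cg : groupoid X C) :
  SIN TG -> numerable xi ->
  forall (L : set C) (V : set G), compact L -> sym_open_nbhd TG V ->
  exists (L' : set C) (V' : set G) (K : set X) (V'' : set G),
    [/\ compact L', sym_open_nbhd TG V', compact K, sym_open_nbhd TG V'' &
      forall (w w' : C -> E -> E) (chi chi' : gauge_elt xi),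
        is_rep xi Cg w -> is_rep xi Cg w' ->
        ent_rep xi Cg L' V' w w' -> ent_gauge K V'' chi chi' ->
        ent_rep xi Cg L V (rep_gauge_act w chi) (rep_gauge_act w' chi')].
Proof.
move=> _ _ L V cL [oV V1 _].
have [W [sW W3]] := nbhs_one_mul3 (open_nbhs_nbhs (conj oV V1)).
exists L, W, (gd_src Cg @` L `|` gd_tgt Cg @` L), W.
split=> //; first exact: compact_src_tgt_image.
move=> w w' chi chi' rw rw' close_w close_chi c z Lc azp.
rewrite (pb_gamma_rep_gauge_act (Cg := Cg)) //; case: (sW) => _ _ Winv.
apply: W3; [apply: Winv; apply: close_chi | apply: close_w | apply: close_chi] => //.
- by right; exists c; rewrite // (p_rep_gauge_act (Cg := Cg)).
- by rewrite ga_p.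
- by left; exists c.
Qed.
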